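(* Let $\alpha\in[1/2,1)\cup(1,\infty)$ and let $p_{X,Y}=p_Xp_{Y\mid X}$ be a joint distribution on finite alphabets $\mathcal X\times\mathcal Y$. Starting from initial distributions $q_X^{(0)}$ on $\mathcal X$ and $q_Y^{(0)}$ on $\mathcal Y$, let $\{q_X^{(k)}\}_{k\ge0}$ and $\{q_Y^{(k)}\}_{k\ge0}$ be generated by the alternating optimization algorithm which, at each step, replaces $q_X$ by $$q_X^*(x)=\frac{\big[\sum_yp_{X,Y}(x,y)^\alpha q_Y(y)^{1-\alpha}\big]^{1/\alpha}}{\sum_{x'}\big[\sum_yp_{X,Y}(x',y)^\alpha q_Y(y)^{1-\alpha}\big]^{1/\alpha}}$$ computed from the current $q_Y$, and then replaces $q_Y$ by $$q_Y^*(y)=\frac{\big[\sum_xp_{X,Y}(x,y)^\alpha q_X(x)^{1-\alpha}\big]^{1/\alpha}}{\sum_{y'}\big[\sum_xp_{X,Y}(x,y')^\alpha q_X(x)^{1-\alpha}\big]^{1/\alpha}}$$ computed from the current $q_X$ (these are the exact minimizers of $D_\alpha(p_Xp_{Y\mid X}\|q_Xq_Y)$ in one argument with the other fixed). Then $$\lim_{k\to\infty}D_\alpha(p_Xp_{Y\mid X}\|q_X^{(k)}q_Y^{(k)})=I_\alpha^{\mathrm{LP}}(X;Y).$$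
   Context: $D_\alpha(p\|q):=\frac{1}{\alpha-1}\log\sum_zp(z)^\alpha q(z)^{1-\alpha}$ is the Rényi divergence of order $\alpha$, and the Lapidoth–Pfister mutual information is $I_\alpha^{\mathrm{LP}}(X;Y):=\min_{q_X}\min_{q_Y}D_\alpha(p_Xp_{Y\mid X}\|q_Xq_Y)$. *)

From HB Require Import structures.
From mathcomp Require Import all_boot all_order all_algebra.
From mathcomp Require Import all_classical all_reals all_analysis.
Set Implicit Arguments. Unset Strict Implicit. Unset Printing Implicit Defensive.
Import Order.TTheory GRing.Theory Num.Theory.
Local Open Scope classical_set_scope.
Local Open Scope ring_scope.

Definition is_dist (R : realType) (T : finType) (q : T -> R) : Prop :=
  (forall t, 0 <= q t) /\ \sum_(t : T) q t = 1.

(* Renyi divergence of order alpha (alpha > 0, alpha <> 1), extended-real valued,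
   with the standard conventions: the sum runs over the support of p
   (terms with p z = 0 vanish since 0 `^ alpha = 0); for alpha > 1 the
   divergence is +oo if q vanishes somewhere on the support of p; if the sum
   is 0 (only possible for alpha < 1, disjoint supports) the divergence is +oo. *)
Definition renyiD (R : realType) (T : finType) (alpha : R) (p q : T -> R) : \bar R :=
  if (1 < alpha) && [exists z, (0 < p z) && (q z == 0)] then +oo%E
  else let s := \sum_(z : T) (p z `^ alpha) * (q z `^ (1 - alpha)) in
       if s == 0 then +oo%E else ((alpha - 1)^-1 * ln s)%:E.

Definition renyiDXY (R : realType) (X Y : finType) (alpha : R)
  (p : X -> Y -> R) (qX : X -> R) (qY : Y -> R) : \bar R :=
  renyiD alpha (fun z : X * Y => p z.1 z.2) (fun z : X * Y => qX z.1 * qY z.2).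

(* Lapidoth--Pfister mutual information: min over q_X, q_Y (written as inf;
   the minimum is attained). *)
Definition I_LP (R : realType) (X Y : finType) (alpha : R) (p : X -> Y -> R) : \bar R :=
  ereal_inf [set d | exists qX : X -> R, exists qY : Y -> R,
     [/\ is_dist qX, is_dist qY & d = renyiDXY alpha p qX qY]].

Definition updX (R : realType) (X Y : finType) (alpha : R)
  (p : X -> Y -> R) (qY : Y -> R) : X -> R :=
  let g := fun x => (\sum_(y : Y) (p x y `^ alpha) * (qY y `^ (1 - alpha))) `^ (alpha^-1) in
  fun x => g x / \sum_(x' : X) g x'.

Definition updY (R : realType) (X Y : finType) (alpha : R)
  (p : X -> Y -> R) (qX : X -> R) : Y -> R :=
  let g := fun y => (\sum_(x : X) (p x y `^ alpha) * (qX x `^ (1 - alpha))) `^ (alpha^-1) in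
  fun y => g y / \sum_(y' : Y) g y'.

Definition ao_step (R : realType) (X Y : finType) (alpha : R) (p : X -> Y -> R)
  (q : (X -> R) * (Y -> R)) : (X -> R) * (Y -> R) :=
  let qX' := updX alpha p q.2 in (qX', updY alpha p qX').

Definition ao_iter (R : realType) (X Y : finType) (alpha : R) (p : X -> Y -> R)
  (qX0 : X -> R) (qY0 : Y -> R) (k : nat) : (X -> R) * (Y -> R) :=
  iter k (ao_step alpha p) (qX0, qY0).

From HB Require Import structures.
From mathcomp Require Import all_boot all_order all_algebra.
From mathcomp Require Import all_classical all_reals all_analysis.
From mathcomp Require Import ring lra.
Import Order.TTheory GRing.Theory Num.Theory.
Local Open Scope classical_set_scope.
Local Open Scope ring_scope.
Set Implicit Arguments. Unset Strict Implicit. Unset Printing Implicit Defensive.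

(* Write S(q_X, q_Y) = \sum_(x,y) p^alpha (q_X q_Y)^(1-alpha), so that
   D_alpha = ln S / (alpha - 1).  For fixed q_Y one has
   S(q_X, q_Y) = Z(q_Y)^alpha * \sum_x (q_X^* x)^alpha (q_X x)^(1-alpha), where Z is the
   normaliser of the update q_X^*; by weighted AM-GM the last sum is <= 1 for alpha < 1
   and >= 1 for alpha > 1.  So every half-step optimises exactly, the divergences are
   nonincreasing and tend to their infimum along the trajectory, and it remains to
   beat an arbitrary competitor (q_X', q_Y') up to any factor rho > 1, by comparing
   the trajectory with the one started at (q_X', q_Y').
   For alpha < 1, if S always stayed below S(q_X', q_Y') / rho, the normalisers would
   satisfy Z' >= rho^(1/alpha) Z at every half-step; since c <= c^((1-alpha)/alpha)
   for c <= 1 when alpha >= 1/2, the ratio q_Y / q_Y' would then grow geometrically along the trajectories,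
   which is impossible for two distributions.
   For alpha > 1 the update contracts ratios: if c <= q_Y / q_Y' <= c Q on the support,
   then after a half-step the spread Q becomes Q^((alpha-1)/alpha).  Hence the two
   trajectories become proportional up to a factor tending to 1, and so do their
   Renyi sums. *)

Section RealFacts.
Variable R : realType.
Implicit Types (a c e r t u v w x y z : R).

Lemma ler_sum_term (T : finType) (F : T -> R) j :
  (forall i, 0 <= F i) -> F j <= \sum_i F i.
Proof. by move=> F0; rewrite (bigD1 j) //= lerDl sumr_ge0. Qed.

Lemma dist_le1 (T : finType) (q : T -> R) i : is_dist q -> q i <= 1.
Proof. by case=> q0 <-; apply: ler_sum_term. Qed.

Lemma dist_ratio_le1 (T : finType) (u v : T -> R) c :
  is_dist u -> is_dist v -> (forall i, c * u i <= v i) -> c <= 1.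
Proof.
move=> [_ u1] [_ v1] le_uv; rewrite -v1 -[c]mulr1 -u1 mulr_sumr.
by apply: ler_sum => i _.
Qed.

Lemma dist_ratio_ge1 (T : finType) (u v : T -> R) c :
  is_dist u -> is_dist v -> (forall i, v i <= c * u i) -> 1 <= c.
Proof.
move=> [_ u1] [_ v1] le_vu; rewrite -v1 -[c]mulr1 -u1 mulr_sumr.
by apply: ler_sum => i _.
Qed.

Lemma sumr_gt0_exists (T : finType) (F : T -> R) : 0 < \sum_i F i -> exists i, 0 < F i.
Proof.
move=> sum_gt0; apply: contrapT => /forallNP F_le0; move: sum_gt0.
by rewrite ltNge sumr_le0 // => i _; rewrite leNgt; apply/negP/F_le0.
Qed.

Lemma exists_pos_lbound (T : finType) (f : T -> R) :
  exists2 c, 0 < c & forall i, 0 < f i -> c <= f i.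
Proof.
exists (\big[Order.min/1]_(i | 0 < f i) f i); first exact: lt_bigmin.
by move=> i fi0; apply: bigmin_le_cond.
Qed.

Lemma exists_expr_lt z e : 0 <= z < 1 -> 0 < e -> exists k, z ^+ k < e.
Proof.
move=> /andP[z0 z1] e0.
have zn : `|z| < 1 by rewrite ger0_norm.
have [N _ /(_ N (leqnn N))] := cvgr_lt _ (cvg_expr zn) _ e0.
by exists N.
Qed.

Lemma exists_powR_expr_le c t w r : 0 < c -> 0 <= t < 1 -> 1 < r ->
  exists k, c `^ (t ^+ k * w) <= r.
Proof.
move=> c0 t01 r1; have /andP[t0 _] := t01.
have L0 : 0 < 1 + `|w * ln c| by rewrite ltr_pwDl.
have [k tk] := exists_expr_lt t01 (divr_gt0 (ln_gt0 r1) L0).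
exists k; rewrite /powR gt_eqF // -[leRHS]lnK ?posrE ?(lt_trans ltr01) //.
rewrite ler_expR -mulrA; apply: le_trans (_ : t ^+ k * (1 + `|w * ln c|) <= _).
  apply: le_trans (ler_norm _) _; rewrite normrM ger0_norm ?exprn_ge0 //.
  by rewrite ler_wpM2l ?exprn_ge0 ?lerDr.
by rewrite -ler_pdivlMr // ltW.
Qed.

Lemma powR_gt1 x r : 1 < x -> 0 < r -> 1 < x `^ r.
Proof.
move=> x_gt1 r0; rewrite /powR gt_eqF ?(lt_trans ltr01) //.
by rewrite -expR0 ltr_expR mulr_gt0 // ln_gt0.
Qed.

Lemma lt0_ger_powR r x y : r < 0 -> 0 < x -> x <= y -> y `^ r <= x `^ r.
Proof.
move=> r0 x0 xy; have y0 : 0 < y by apply: lt_le_trans xy.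
rewrite /powR !gt_eqF // ler_expR; apply: ler_wnM2l; first exact: ltW.
by rewrite ler_ln ?posrE.
Qed.

Lemma ler_mul_powR_root a c u v : 0 < a -> 0 <= c -> 0 <= u -> 0 <= v ->
  c * u `^ a <= v `^ a -> c `^ a^-1 * u <= v.
Proof.
move=> a0 c0 u0 v0 le_uv.
have := @ge0_ler_powR R a^-1 _ (c * u `^ a) (v `^ a).
rewrite powRM ?powR_ge0 // -!powRrM !mulfV ?gt_eqF // !powRr1 //; apply => //.
- by rewrite invr_ge0 ltW.
- by rewrite nnegrE mulr_ge0 ?powR_ge0.
- by rewrite nnegrE powR_ge0.
Qed.

Lemma weighted_amgm a u v : 0 < a < 1 -> 0 <= u -> 0 <= v ->
  u `^ a * v `^ (1 - a) <= a * u + (1 - a) * v.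
Proof.
move=> /andP[a0 a1] u0 v0; have b0 : 0 < 1 - a by rewrite subr_gt0.
have := @conjugate_powR R (u `^ a) (v `^ (1 - a)) a^-1 (1 - a)^-1
  (powR_ge0 _ _) (powR_ge0 _ _).
rewrite !invr_gt0 a0 b0 !invrK addrC subrK => /(_ isT isT erefl).
by rewrite -!powRrM !mulfV ?gt_eqF // !powRr1 // (mulrC a) (mulrC (1 - a)).
Qed.

Lemma weighted_amgm_rev a u v : 1 < a -> 0 <= u -> 0 < v ->
  a * u + (1 - a) * v <= u `^ a * v `^ (1 - a).
Proof.
move=> a1 u0 v0; have a0 : 0 < a by apply: lt_trans a1.
set w := u `^ a * v `^ (1 - a).
have w0 : 0 <= w by rewrite mulr_ge0 ?powR_ge0.
have ai : 0 < a^-1 < 1 by rewrite invr_gt0 a0 invf_lt1.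
have := weighted_amgm ai w0 (ltW v0).
have -> : w `^ a^-1 * v `^ (1 - a^-1) = u.
  rewrite /w powRM ?powR_ge0 // -!powRrM mulfV ?gt_eqF // powRr1 //.
  rewrite -mulrA -powRD; last by rewrite (gt_eqF v0) implybT.
  have -> : (1 - a) * a^-1 + (1 - a^-1) = 0 by field; rewrite gt_eqF.
  by rewrite powRr0 mulr1.
move=> le_u; have : a * u <= a * (a^-1 * w + (1 - a^-1) * v) by rewrite ler_pM2l.
have -> : a * (a^-1 * w + (1 - a^-1) * v) = w - (1 - a) * v.
  by field; rewrite gt_eqF.
lra.
Qed.

Lemma dist_powR_sum_le1 (T : finType) a (u v : T -> R) : 0 < a < 1 ->
  is_dist u -> is_dist v -> \sum_i u i `^ a * v i `^ (1 - a) <= 1.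
Proof.
move=> a01 [u0 u1] [v0 v1].
apply: le_trans (_ : \sum_i (a * u i + (1 - a) * v i) <= 1).
  by apply: ler_sum => i _; apply: weighted_amgm.
by rewrite big_split /= -!mulr_sumr u1 v1 !mulr1 subrKC.
Qed.

Lemma dist_powR_sum_ge1 (T : finType) a (u v : T -> R) : 1 < a ->
  is_dist u -> is_dist v -> (forall i, 0 < u i -> 0 < v i) ->
  1 <= \sum_i u i `^ a * v i `^ (1 - a).
Proof.
move=> a1 [u0 u1] [v0 v1] uv.
apply: le_trans (_ : 1 <= \sum_i (a * u i + (1 - a) * v i)) _.
  by rewrite big_split /= -!mulr_sumr u1 v1 !mulr1 subrKC.
apply: ler_sum => i _; have [vi0|] := ltP 0 (v i); first exact: weighted_amgm_rev.
move=> vi_le0; have vi0 : v i = 0 by apply/eqP; rewrite eq_le vi_le0 v0.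
have ui0 : u i = 0.
  by apply/eqP; rewrite eq_le u0 andbT leNgt; apply/negP => /uv; rewrite vi0 ltxx.
by rewrite ui0 vi0 !mulr0 addr0 powR0 ?mul0r // gt_eqF // (lt_trans ltr01).
Qed.

Lemma ln_le_expR_shift s t e : 0 < s -> 0 < t -> t <= expR e * s -> ln t <= e + ln s.
Proof.
move=> s0 t0 le_ts; rewrite -[e in e + _]expRK -lnM ?posrE ?expR_gt0 //.
by rewrite ler_ln ?posrE ?mulr_gt0 ?expR_gt0.
Qed.

Lemma renyi_log_le_lt1 a s t e : a < 1 -> 0 < s -> 0 < t ->
  t <= expR ((1 - a) * e) * s -> (a - 1)^-1 * ln s <= (a - 1)^-1 * ln t + e.
Proof.
move=> a1 s0 t0 /(ln_le_expR_shift s0 t0) le_ln; have a10 : a - 1 < 0 by rewrite subr_lt0.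
rewrite -(ler_nM2l a10) mulrDr !mulrA mulfV ?lt_eqF // !mul1r; lra.
Qed.

Lemma renyi_log_le_gt1 a s t e : 1 < a -> 0 < s -> 0 < t ->
  s <= expR ((a - 1) * e) * t -> (a - 1)^-1 * ln s <= (a - 1)^-1 * ln t + e.
Proof.
move=> a1 s0 t0 /(ln_le_expR_shift t0 s0) le_ln; have a10 : 0 < a - 1 by rewrite subr_gt0.
rewrite -(ler_pM2l a10) mulrDr !mulrA mulfV ?gt_eqF // !mul1r; lra.
Qed.

End RealFacts.

Section UpdateMap.
Variables (R : realType) (alpha : R) (X Y : finType) (p : X -> Y -> R).
Hypothesis alpha_gt0 : 0 < alpha.
Hypothesis p_ge0 : forall x y, 0 <= p x y.
Implicit Types (a : X -> R) (b : Y -> R) (c : R).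

Definition renyi_sum a b :=
  \sum_x \sum_y p x y `^ alpha * (a x `^ (1 - alpha) * b y `^ (1 - alpha)).

Definition updX_weight b x :=
  (\sum_y p x y `^ alpha * b y `^ (1 - alpha)) `^ alpha^-1.

Definition updX_norm b := \sum_x updX_weight b x.

Lemma updXE b x : updX alpha p b x = updX_weight b x / updX_norm b.
Proof. by []. Qed.

Lemma updX_weight_ge0 b x : 0 <= updX_weight b x.
Proof. exact: powR_ge0. Qed.

Lemma updX_norm_ge0 b : 0 <= updX_norm b.
Proof. by apply: sumr_ge0 => x _; apply: updX_weight_ge0. Qed.

Lemma updX_ge0 b x : 0 <= updX alpha p b x.
Proof. by rewrite updXE divr_ge0 ?updX_weight_ge0 ?updX_norm_ge0. Qed.

Lemma updX_dist b : 0 < updX_norm b -> is_dist (updX alpha p b).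
Proof.
by move=> Z0; split=> [x|]; rewrite ?updX_ge0 // -mulr_suml mulfV ?gt_eqF.
Qed.

Lemma renyi_sum_ge0 a b : 0 <= renyi_sum a b.
Proof.
by apply: sumr_ge0 => x _; apply: sumr_ge0 => y _; rewrite !mulr_ge0 ?powR_ge0.
Qed.

Lemma updX_weight_powR b x :
  updX_weight b x `^ alpha = \sum_y p x y `^ alpha * b y `^ (1 - alpha).
Proof.
rewrite -powRrM mulVf ?gt_eqF // powRr1 //.
by apply: sumr_ge0 => y _; rewrite mulr_ge0 ?powR_ge0.
Qed.

Lemma renyi_sumE a b :
  renyi_sum a b = \sum_x a x `^ (1 - alpha) * updX_weight b x `^ alpha.
Proof.
apply: eq_bigr => x _; rewrite updX_weight_powR mulr_sumr.
by apply: eq_bigr => y _; rewrite mulrCA.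
Qed.

Lemma updX_norm_gt0 a b : 0 < renyi_sum a b -> 0 < updX_norm b.
Proof.
move=> S0; rewrite lt_neqAle eq_sym updX_norm_ge0 andbT; apply/eqP => Z0.
have /psumr_eq0P g0 := Z0; move: S0; rewrite renyi_sumE big1 ?ltxx // => x _.
by rewrite g0 ?powR0 ?mulr0 ?gt_eqF // => x' _; apply: updX_weight_ge0.
Qed.

Lemma updX_weight_gt0 b x y : 0 < p x y -> 0 < b y -> 0 < updX_weight b x.
Proof.
move=> pxy by0; apply: powR_gt0.
apply: lt_le_trans (ler_sum_term (F := fun y => p x y `^ alpha * b y `^ (1 - alpha)) y _).
  by rewrite mulr_gt0 ?powR_gt0.
by move=> y'; rewrite mulr_ge0 ?powR_ge0.
Qed.

Lemma renyi_sum_gt0 a b x y : 0 < p x y -> 0 < a x -> 0 < b y -> 0 < renyi_sum a b.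
Proof.
move=> pxy ax by0; rewrite renyi_sumE.
apply: lt_le_trans
  (ler_sum_term (F := fun x => a x `^ (1 - alpha) * updX_weight b x `^ alpha) x _).
  exact: mulr_gt0 (powR_gt0 _ ax) (powR_gt0 _ (updX_weight_gt0 pxy by0)).
by move=> x'; rewrite mulr_ge0 ?powR_ge0.
Qed.

Lemma updX_gt0 b x y : 0 < p x y -> 0 < b y -> 0 < updX alpha p b x.
Proof.
move=> pxy by0; have g0 := updX_weight_gt0 pxy by0.
rewrite updXE divr_gt0 //.
by apply: lt_le_trans g0 (ler_sum_term x _) => x'; apply: updX_weight_ge0.
Qed.

Lemma updX_weight_support b x : 0 < updX_weight b x -> exists y, 0 < p x y.
Proof.
move=> g0; apply: contrapT => /forallNP np; move: g0.
rewrite /updX_weight big1 ?powR0 ?ltxx ?invr_eq0 ?gt_eqF // => y _.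
have -> : p x y = 0 by apply/eqP; rewrite eq_le p_ge0 andbT leNgt; apply/negP.
by rewrite powR0 ?mul0r ?gt_eqF.
Qed.

Lemma renyi_sum_factor a b : 0 < updX_norm b -> renyi_sum a b =
  updX_norm b `^ alpha * \sum_x updX alpha p b x `^ alpha * a x `^ (1 - alpha).
Proof.
move=> Z0; rewrite renyi_sumE mulr_sumr; apply: eq_bigr => x _.
rewrite mulrA -powRM ?updX_norm_ge0 ?updX_ge0 // updXE.
by rewrite [updX_norm b * _]mulrC divfK ?gt_eqF // mulrC.
Qed.

Lemma renyi_sum_updX b : 0 < updX_norm b ->
  renyi_sum (updX alpha p b) b = updX_norm b `^ alpha.
Proof.
move=> Z0; rewrite renyi_sum_factor //.
rewrite (eq_bigr (updX alpha p b)) => [|x _].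
  by case: (updX_dist Z0) => _ ->; rewrite mulr1.
by rewrite -powRD ?subrKC ?oner_eq0 ?powRr1 ?updX_ge0.
Qed.

Lemma renyi_sum_le_updX a b : alpha < 1 -> is_dist a -> 0 < updX_norm b ->
  renyi_sum a b <= renyi_sum (updX alpha p b) b.
Proof.
move=> alpha_lt1 da Z0; rewrite renyi_sum_updX // renyi_sum_factor //.
rewrite -[leRHS]mulr1 ler_wpM2l ?powR_ge0 //.
by apply: dist_powR_sum_le1 (updX_dist Z0) da; rewrite alpha_gt0.
Qed.

Lemma renyi_sum_updX_le a b : 1 < alpha -> is_dist a -> 0 < updX_norm b ->
  (forall x y, 0 < p x y -> 0 < a x) ->
  renyi_sum (updX alpha p b) b <= renyi_sum a b.
Proof.
move=> alpha_gt1 da Z0 supp_a; rewrite renyi_sum_updX // renyi_sum_factor //.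
rewrite -[leLHS]mulr1 ler_wpM2l ?powR_ge0 //.
apply: dist_powR_sum_ge1 (updX_dist Z0) da _ => // x.
rewrite updXE pmulr_lgt0 ?invr_gt0 // => /updX_weight_support [y].
exact: supp_a.
Qed.

Lemma updX_weightZ c b x : 0 < c -> (forall y, 0 <= b y) ->
  updX_weight (fun y => c * b y) x = c `^ ((1 - alpha) / alpha) * updX_weight b x.
Proof.
move=> c0 b0; rewrite /updX_weight.
under eq_bigr => y _ do rewrite powRM ?(ltW c0) // mulrCA.
rewrite -mulr_sumr powRM ?powR_ge0 ?sumr_ge0 // => [|y _].
  by rewrite -powRrM.
by rewrite mulr_ge0 ?powR_ge0.
Qed.

Lemma updX_weight_le_lt1 b1 b2 x : alpha < 1 -> (forall y, 0 <= b1 y) ->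
  (forall y, b1 y <= b2 y) -> updX_weight b1 x <= updX_weight b2 x.
Proof.
move=> alpha_lt1 b1_ge0 le_b12; apply: ge0_ler_powR.
- by rewrite invr_ge0 ltW.
- by rewrite nnegrE sumr_ge0 // => y _; rewrite mulr_ge0 ?powR_ge0.
- by rewrite nnegrE sumr_ge0 // => y _; rewrite mulr_ge0 ?powR_ge0.
apply: ler_sum => y _; rewrite ler_wpM2l ?powR_ge0 // ge0_ler_powR ?nnegrE //.
- by rewrite subr_ge0 ltW.
- exact: le_trans (le_b12 y).
Qed.

Lemma updX_weight_ge_gt1 b1 b2 x : 1 < alpha ->
  (forall y, 0 < p x y -> 0 < b1 y /\ b1 y <= b2 y) ->
  updX_weight b2 x <= updX_weight b1 x.
Proof.
move=> alpha_gt1 le_b12; apply: ge0_ler_powR.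
- by rewrite invr_ge0 ltW.
- by rewrite nnegrE sumr_ge0 // => y _; rewrite mulr_ge0 ?powR_ge0.
- by rewrite nnegrE sumr_ge0 // => y _; rewrite mulr_ge0 ?powR_ge0.
apply: ler_sum => y _; have [pxy|] := ltP 0 (p x y); last first.
  move=> pxy_le0; have -> : p x y = 0 by apply/eqP; rewrite eq_le pxy_le0 p_ge0.
  by rewrite powR0 ?gt_eqF // !mul0r.
have [b1y le_b12y] := le_b12 y pxy.
by rewrite ler_wpM2l ?powR_ge0 // lt0_ger_powR // subr_lt0.
Qed.

Lemma updX_ratio_lt1 c s b b' : 1 / 2 <= alpha -> alpha < 1 -> 0 < c -> 0 < s ->
  is_dist b -> is_dist b' -> (forall y, c * b' y <= b y) ->
  0 < updX_norm b -> s * updX_norm b <= updX_norm b' ->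
  forall x, c * s * updX alpha p b' x <= updX alpha p b x.
Proof.
move=> alpha_ge_half alpha_lt1 c0 s0 db db' le_cb Z0 le_sZ x.
have c_le1 : c <= 1 := dist_ratio_le1 db' db le_cb.
have r_le1 : (1 - alpha) / alpha <= 1.
  by rewrite ler_pdivrMr // mul1r lerBlDr -mulr2n -mulr_natr -ler_pdivrMr.
have Z'0 : 0 < updX_norm b' by apply: lt_le_trans le_sZ; rewrite mulr_gt0.
have le_g : c * updX_weight b' x <= updX_weight b x.
  have [b'0 _] := db'.
  apply: le_trans (updX_weight_le_lt1 x alpha_lt1 _ le_cb) => [|y].
    by rewrite updX_weightZ // ler_wpM2r ?updX_weight_ge0 // ger1_powR ?c0.
  by rewrite mulr_ge0 ?(ltW c0).
rewrite !updXE mulrACA; apply: ler_pM => //.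
- by rewrite mulr_ge0 ?updX_weight_ge0 ?(ltW c0).
- by rewrite divr_ge0 ?updX_norm_ge0 ?(ltW s0).
- by rewrite (ler_pdivrMr _ _ Z'0) mulrC (ler_pdivlMr _ _ Z0).
Qed.

Lemma updX_norm_le_gt1 c b b' : 1 < alpha -> 0 < c -> (forall y, 0 <= b' y) ->
  (forall x y, 0 < p x y -> 0 < b' y /\ c * b' y <= b y) ->
  updX_norm b <= c `^ ((1 - alpha) / alpha) * updX_norm b'.
Proof.
move=> alpha_gt1 c0 b'0 le_cb; rewrite mulr_sumr; apply: ler_sum => x _.
rewrite -(updX_weightZ x c0 b'0); apply: updX_weight_ge_gt1 => // y /le_cb[b'y ->].
by rewrite mulr_gt0.
Qed.

(* Positivity of [b'] on the support matters: with [0 `^ (1 - alpha) = 0] the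
   weights are not monotone for [alpha > 1] at zero entries. *)
Definition ratio_within c Q b b' :=
  forall x y, 0 < p x y -> [/\ 0 < b' y, c * b' y <= b y & b y <= c * Q * b' y].

Lemma updX_ratio_gt1 c Q b b' : 1 < alpha -> 0 < c -> 0 < Q ->
  (forall y, 0 <= b' y) -> ratio_within c Q b b' -> 0 < updX_norm b -> 0 < updX_norm b' ->
  exists2 c', 0 < c' & forall x, c' * updX alpha p b' x <= updX alpha p b x <=
                                 c' * Q `^ ((alpha - 1) / alpha) * updX alpha p b' x.
Proof.
move=> alpha_gt1 c0 Q0 b'0 bnd Z0 Z'0; set r := (1 - alpha) / alpha.
have cQ0 : 0 < c * Q by rewrite mulr_gt0.
have lower x : (c * Q) `^ r * updX_weight b' x <= updX_weight b x.
  rewrite -(updX_weightZ x cQ0 b'0).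
  apply: updX_weight_ge_gt1 => // y /bnd[b'y cby ->].
  by split; rewrite ?(lt_le_trans _ cby) ?mulr_gt0.
have upper x : updX_weight b x <= c `^ r * updX_weight b' x.
  rewrite -(updX_weightZ x c0 b'0).
  by apply: updX_weight_ge_gt1 => // y /bnd[b'y cby _]; rewrite mulr_gt0.
exists ((c * Q) `^ r * (updX_norm b' / updX_norm b)).
  exact: mulr_gt0 (powR_gt0 _ cQ0) (divr_gt0 Z'0 Z0).
have -> : Q `^ ((alpha - 1) / alpha) = (Q `^ r)^-1.
  by rewrite -powRN /r -mulNr opprB.
move=> x; move: (powR_gt0 r Q0) Z0 Z'0 (lower x) (upper x).
rewrite !updXE powRM ?(ltW c0) ?(ltW Q0) //.
move: (Q `^ r) (updX_norm b) (updX_norm b') (updX_weight b x) (updX_weight b' x).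
move=> q Z Z' g g' q0 {}Z0 {}Z'0 lo up.
have -> : c `^ r * q * (Z' / Z) * (g' / Z') = c `^ r * q * g' / Z.
  by field; rewrite !gt_eqF.
have -> : c `^ r * q * (Z' / Z) * q^-1 * (g' / Z') = c `^ r * g' / Z.
  by field; rewrite !gt_eqF.
by rewrite !ler_pM2r ?invr_gt0 // lo up.
Qed.

End UpdateMap.

Lemma renyi_sum_transpose (R : realType) (alpha : R) (X Y : finType)
    (p : X -> Y -> R) a b :
  renyi_sum alpha p a b = renyi_sum alpha (fun y x => p x y) b a.
Proof.
rewrite /renyi_sum exchange_big; apply: eq_bigr => y _; apply: eq_bigr => x _.
by rewrite (mulrC (a x `^ _)).
Qed.

Section Trajectory.
Variables (R : realType) (alpha : R) (X Y : finType) (p : X -> Y -> R).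
Hypothesis alpha_gt0 : 0 < alpha.
Hypothesis p_ge0 : forall x y, 0 <= p x y.
Implicit Types (a : X -> R) (b : Y -> R).

(* [updY alpha p] is convertible to [updX alpha pT]: a q_Y-step is a q_X-step for the
   transposed joint distribution. *)
Local Notation pT := (fun y x => p x y).
Local Notation traj a b k := (ao_iter alpha p a b k).
Local Notation rsum a b k := (renyi_sum alpha p (traj a b k).1 (traj a b k).2).
Local Notation rsum_half a b k :=
  (renyi_sum alpha p (traj a b k.+1).1 (traj a b k).2).

Definition admissible a b :=
  [/\ is_dist a, is_dist b & 0 < renyi_sum alpha p a b].

Definition supported a b := forall x y, 0 < p x y -> 0 < a x /\ 0 < b y.

Lemma admissible_step a b : admissible a b ->
  admissible (updX alpha p b) (updX alpha pT (updX alpha p b)).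
Proof.
case=> _ _ S0; have Z0 := updX_norm_gt0 alpha_gt0 S0.
have S1 : 0 < renyi_sum alpha p (updX alpha p b) b.
  by rewrite renyi_sum_updX // powR_gt0.
rewrite renyi_sum_transpose in S1; have ZT0 := updX_norm_gt0 alpha_gt0 S1.
split; [exact: updX_dist | exact: updX_dist |].
by rewrite renyi_sum_transpose renyi_sum_updX // powR_gt0.
Qed.

Lemma admissible_traj a b k : admissible a b -> admissible (traj a b k).1 (traj a b k).2.
Proof. by move=> adm; elim: k => [|k /admissible_step]. Qed.

Lemma supported_step a b : supported a b ->
  supported (updX alpha p b) (updX alpha pT (updX alpha p b)).
Proof.
move=> supp x y pxy; have [_ by0] := supp x y pxy.
have ax := updX_gt0 alpha pxy by0; split=> //; exact: (updX_gt0 alpha (p := pT) pxy ax).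
Qed.

Lemma supported_traj a b k : supported a b -> supported (traj a b k).1 (traj a b k).2.
Proof. by move=> supp; elim: k => [|k /supported_step]. Qed.

Lemma rsum_half_E a b k : admissible a b ->
  rsum_half a b k = updX_norm alpha p (traj a b k).2 `^ alpha.
Proof.
by move=> /(admissible_traj k) [_ _ /(updX_norm_gt0 alpha_gt0)/(renyi_sum_updX alpha_gt0)].
Qed.

Lemma rsum_succ_E a b k : admissible a b ->
  rsum a b k.+1 = updX_norm alpha pT (traj a b k.+1).1 `^ alpha.
Proof.
move=> /(admissible_traj k.+1) [_ _]; rewrite renyi_sum_transpose.
by move=> /(updX_norm_gt0 alpha_gt0)/(renyi_sum_updX alpha_gt0).
Qed.

Lemma rsum_traj_lt1 a b k : alpha < 1 -> admissible a b ->
  rsum a b k <= rsum_half a b k <= rsum a b k.+1.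
Proof.
move=> alpha_lt1 adm; have [da db S0] := admissible_traj k adm.
have [_ _ S1] := admissible_traj k.+1 adm.
rewrite renyi_sum_transpose in S1.
apply/andP; split; first exact: renyi_sum_le_updX (updX_norm_gt0 alpha_gt0 S0).
rewrite renyi_sum_transpose [rsum a b k.+1]renyi_sum_transpose.
exact: renyi_sum_le_updX db (updX_norm_gt0 alpha_gt0 S1).
Qed.

Lemma rsum_traj_gt1 a b k : 1 < alpha -> admissible a b -> supported a b ->
  rsum a b k.+1 <= rsum_half a b k <= rsum a b k.
Proof.
move=> alpha_gt1 adm supp; have [da db S0] := admissible_traj k adm.
have [_ _ S1] := admissible_traj k.+1 adm.
have suppk := supported_traj k supp.
rewrite renyi_sum_transpose in S1.
apply/andP; split; last first.
  apply: renyi_sum_updX_le (updX_norm_gt0 alpha_gt0 S0) _ => // x y pxy.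
  by case: (suppk x y pxy).
rewrite renyi_sum_transpose [rsum_half a b k]renyi_sum_transpose.
apply: renyi_sum_updX_le db (updX_norm_gt0 alpha_gt0 S1) _ => // y x pxy.
by case: (suppk x y pxy).
Qed.

Lemma renyi_sum_pair a b : (forall x, 0 <= a x) -> (forall y, 0 <= b y) ->
  \sum_(z : X * Y) p z.1 z.2 `^ alpha * (a z.1 * b z.2) `^ (1 - alpha) =
  renyi_sum alpha p a b.
Proof.
by move=> a0 b0; rewrite /renyi_sum pair_bigA; apply: eq_bigr => -[x y] _; rewrite powRM.
Qed.

Lemma renyiDXY_E a b : admissible a b -> (1 < alpha -> supported a b) ->
  renyiDXY alpha p a b = ((alpha - 1)^-1 * ln (renyi_sum alpha p a b))%:E.
Proof.
move=> [[a0 _] [b0 _] S0] supp; rewrite /renyiDXY /renyiD.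
case: ifP => [/andP[alpha_gt1 /existsP[[x y] /andP[/= pxy]]]|_].
  by have [ax by0] := supp alpha_gt1 x y pxy; rewrite mulf_eq0 !gt_eqF.
by rewrite renyi_sum_pair // gt_eqF.
Qed.

Lemma renyiDXY_finite a b : is_dist a -> is_dist b -> renyiDXY alpha p a b != +oo%E ->
  admissible a b /\ (1 < alpha -> supported a b).
Proof.
move=> da db; have [[a0 _] [b0 _]] := (da, db); rewrite /renyiDXY /renyiD.
case: ifPn => [_|no_zero]; first by rewrite eqxx.
rewrite renyi_sum_pair //; case: ifPn => [_|S_neq0 _]; first by rewrite eqxx.
split; first by split; rewrite // lt_neqAle eq_sym S_neq0 renyi_sum_ge0.
move=> alpha_gt1 x y pxy; move: no_zero; rewrite alpha_gt1 /= => /existsPn/(_ (x, y)).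
rewrite /= pxy mulf_eq0 negb_or => /andP[ax_neq0 by_neq0].
by rewrite !lt_neqAle eq_sym ax_neq0 eq_sym by_neq0 a0 b0.
Qed.

Lemma renyiDXY_traj a b k : admissible a b -> (1 < alpha -> supported a b) ->
  renyiDXY alpha p (traj a b k).1 (traj a b k).2 =
  ((alpha - 1)^-1 * ln (rsum a b k))%:E.
Proof.
move=> adm supp; apply: renyiDXY_E; first exact: admissible_traj.
by move=> /supp /(supported_traj k).
Qed.

Lemma renyiDXY_traj_nonincreasing a b : alpha != 1 -> admissible a b ->
  (1 < alpha -> supported a b) ->
  nonincreasing_seq (fun k => renyiDXY alpha p (traj a b k).1 (traj a b k).2).
Proof.
move=> alpha_neq1 adm supp; apply/nonincreasing_seqP => k.
rewrite !renyiDXY_traj // lee_fin.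
have [_ _ S0] := admissible_traj k adm; have [_ _ S1] := admissible_traj k.+1 adm.
have [alpha_lt1|alpha_gt1|alpha_eq1] := ltgtP alpha 1.
- apply: ler_wnM2l; first by rewrite invr_le0 subr_le0; apply: ltW.
  rewrite ler_ln ?posrE //.
  by have /andP[/le_trans] := rsum_traj_lt1 k alpha_lt1 adm; apply.
- apply: ler_wpM2l; first by rewrite invr_ge0 subr_ge0; apply: ltW.
  rewrite ler_ln ?posrE //.
  by have /andP[le1 /(le_trans le1)] := rsum_traj_gt1 k alpha_gt1 adm (supp alpha_gt1).
- by rewrite alpha_eq1 eqxx in alpha_neq1.
Qed.

Lemma renyi_sum_le_traj_lt1 a b k : alpha < 1 -> admissible a b ->
  renyi_sum alpha p a b <= rsum a b k /\ renyi_sum alpha p a b <= rsum_half a b k.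
Proof.
move=> alpha_lt1 adm; have mono j := rsum_traj_lt1 j alpha_lt1 adm.
elim: k => [|k [_ IH]].
  by have /andP[le1 _] := mono 0%N; split; [exact: lexx | exact: le1].
have /andP[_ le1] := mono k; have /andP[le2 _] := mono k.+1.
by have le3 := le_trans IH le1; split; [exact: le3 | exact: le_trans le3 le2].
Qed.

Lemma traj_le_renyi_sum_gt1 a b k : 1 < alpha -> admissible a b -> supported a b ->
  rsum a b k <= renyi_sum alpha p a b.
Proof.
move=> alpha_gt1 adm supp; elim: k => [|k IH]; first exact: lexx.
have /andP[le1 le2] := rsum_traj_gt1 k alpha_gt1 adm supp.
exact: le_trans le1 (le_trans le2 IH).
Qed.

Lemma traj_ratio_lt1 a b a' b' c s : 1 / 2 <= alpha -> alpha < 1 -> 0 < c -> 0 < s ->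
  admissible a b -> admissible a' b' -> (forall y, c * b' y <= b y) ->
  (forall k, s * updX_norm alpha p (traj a b k).2 <= updX_norm alpha p (traj a' b' k).2) ->
  (forall k, s * updX_norm alpha pT (traj a b k.+1).1 <=
             updX_norm alpha pT (traj a' b' k.+1).1) ->
  forall k y, c * (s * s) ^+ k * (traj a' b' k).2 y <= (traj a b k).2 y.
Proof.
move=> alpha_ge_half alpha_lt1 c0 s0 adm adm' le_cb gapX gapY.
elim=> [|k IH] y; first by rewrite expr0 mulr1.
have [_ db S0] := admissible_traj k adm; have [_ db' _] := admissible_traj k adm'.
have [da1 _ S1] := admissible_traj k.+1 adm; have [da1' _ _] := admissible_traj k.+1 adm'.
rewrite renyi_sum_transpose in S1.
have ck0 : 0 < c * (s * s) ^+ k by rewrite mulr_gt0 // exprn_gt0 // mulr_gt0.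
have le_a := updX_ratio_lt1 alpha_gt0 alpha_ge_half alpha_lt1 ck0 s0 db db' IH
  (updX_norm_gt0 alpha_gt0 S0) (gapX k).
have -> : c * (s * s) ^+ k.+1 = c * (s * s) ^+ k * s * s by rewrite exprSr !mulrA.
exact: (updX_ratio_lt1 (p := pT) alpha_gt0 alpha_ge_half alpha_lt1 (mulr_gt0 ck0 s0) s0
  da1 da1' le_a (updX_norm_gt0 alpha_gt0 S1) (gapY k) y).
Qed.

Lemma traj_norm_gap_lt1 a b a' b' rho : alpha < 1 -> 0 <= rho ->
  admissible a b -> admissible a' b' ->
  (forall k, rho * rsum a b k <= renyi_sum alpha p a' b') ->
  (forall k, rho `^ alpha^-1 * updX_norm alpha p (traj a b k).2 <=
             updX_norm alpha p (traj a' b' k).2) /\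
  (forall k, rho `^ alpha^-1 * updX_norm alpha pT (traj a b k.+1).1 <=
             updX_norm alpha pT (traj a' b' k.+1).1).
Proof.
move=> alpha_lt1 rho0 adm adm' le_k; set T := renyi_sum alpha p a' b'.
have T_le k := renyi_sum_le_traj_lt1 k alpha_lt1 adm'.
split=> k; apply: (ler_mul_powR_root alpha_gt0 rho0 (updX_norm_ge0 _ _ _)
                                     (updX_norm_ge0 _ _ _)).
- have le1 : rho * updX_norm alpha p (traj a b k).2 `^ alpha <= T.
    rewrite -(rsum_half_E k adm); apply: le_trans (le_k k.+1).
    by rewrite ler_wpM2l //; have /andP[_] := rsum_traj_lt1 k alpha_lt1 adm.
  by apply: le_trans le1 _; rewrite -(rsum_half_E k adm'); exact: (T_le k).2.
- have le1 : rho * updX_norm alpha pT (traj a b k.+1).1 `^ alpha <= T.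
    by rewrite -(rsum_succ_E k adm); exact: le_k.
  by apply: le_trans le1 _; rewrite -(rsum_succ_E k adm'); exact: (T_le k.+1).1.
Qed.

Lemma traj_approx_lt1 a b a' b' rho : 1 / 2 <= alpha -> alpha < 1 ->
  admissible a b -> (forall y, 0 < b y) -> admissible a' b' -> 1 < rho ->
  exists k, renyi_sum alpha p a' b' <= rho * rsum a b k.
Proof.
move=> alpha_ge_half alpha_lt1 adm b_gt0 adm' rho_gt1.
apply: contrapT => /forallNP no_k.
have le_k k : rho * rsum a b k <= renyi_sum alpha p a' b'.
  by rewrite leNgt; apply/negP => /ltW /no_k.
have rho0 : 0 <= rho by rewrite ltW // (lt_trans ltr01).
have [gapX gapY] := traj_norm_gap_lt1 alpha_lt1 rho0 adm adm' le_k.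
set s := rho `^ alpha^-1; have s_gt1 : 1 < s by rewrite powR_gt1 ?invr_gt0.
have [c c0 c_le] := exists_pos_lbound b.
have [_ db' _] := adm'.
have le_cb y : c * b' y <= b y.
  by rewrite (le_trans _ (c_le y (b_gt0 y))) // ler_piMr ?(ltW c0) // dist_le1.
have ratio := traj_ratio_lt1 alpha_ge_half alpha_lt1 c0 (lt_trans ltr01 s_gt1)
  adm adm' le_cb gapX gapY.
have ss_gt1 : 1 < s * s by rewrite (lt_trans s_gt1) // ltr_pMr ?(lt_trans ltr01).
have [k ltk] : exists k, (s * s)^-1 ^+ k < c.
  by apply: exists_expr_lt => //; rewrite invr_ge0 ltW ?invf_lt1 ?(lt_trans ltr01).
have [_ dbk _] := admissible_traj k adm; have [_ dbk' _] := admissible_traj k adm'.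
have := dist_ratio_le1 dbk' dbk (ratio k).
rewrite -ler_pdivlMr ?exprn_gt0 ?(lt_trans ltr01) // div1r -exprVn => ck_le.
by have := lt_le_trans ltk ck_le; rewrite ltxx.
Qed.

Lemma traj_ratio_gt1 a b a' b' : 1 < alpha ->
  admissible a b -> supported a b -> admissible a' b' -> supported a' b' ->
  exists2 Q, 0 < Q & forall k, exists2 c, 0 < c &
    ratio_within p c (Q `^ ((((alpha - 1) / alpha) ^+ 2) ^+ k))
                 (traj a b k).2 (traj a' b' k).2.
Proof.
move=> alpha_gt1 adm supp adm' supp'; set s := (alpha - 1) / alpha.
have [c0 c0_gt0 c0_le] := exists_pos_lbound b.
have [m m_gt0 m_le] := exists_pos_lbound b'.
have Q_gt0 : 0 < (c0 * m)^-1 by rewrite invr_gt0 mulr_gt0.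
exists (c0 * m)^-1 => //; set Q := (c0 * m)^-1.
elim=> [|k [c c_gt0 bnd]].
  exists c0 => // x y pxy; have [_ by0] := supp x y pxy; have [_ b'y0] := supp' x y pxy.
  have [_ db _] := adm; have [_ db' _] := adm'.
  rewrite expr0 powRr1 ?(ltW Q_gt0) // /Q invfM mulrA mulfV ?gt_eqF // mul1r; split => //.
    by rewrite (le_trans _ (c0_le y by0)) // ler_piMr ?(ltW c0_gt0) // dist_le1.
  rewrite (le_trans (dist_le1 y db)) // -(ler_pM2l m_gt0) mulr1 mulrA mulfV ?gt_eqF //.
  by rewrite mul1r m_le.
have [_ _ S0] := admissible_traj k adm; have [_ [b'k0 _] S0'] := admissible_traj k adm'.
have [_ _ S1] := admissible_traj k.+1 adm; have [[a'k0 _] _ S1'] := admissible_traj k.+1 adm'.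
rewrite renyi_sum_transpose in S1; rewrite renyi_sum_transpose in S1'.
have Qk_gt0 : 0 < Q `^ ((s ^+ 2) ^+ k) := powR_gt0 _ Q_gt0.
have [c1 c1_gt0 bndX] := updX_ratio_gt1 alpha_gt0 p_ge0 alpha_gt1 c_gt0 Qk_gt0 b'k0 bnd
  (updX_norm_gt0 alpha_gt0 S0) (updX_norm_gt0 alpha_gt0 S0').
have bndX' : ratio_within pT c1 (Q `^ ((s ^+ 2) ^+ k) `^ s)
                          (traj a b k.+1).1 (traj a' b' k.+1).1.
  move=> y x pxy; have [a'x _] := supported_traj k.+1 supp' pxy.
  by have /andP[lo up] := bndX x; split.
have [c2 c2_gt0 bndY] := updX_ratio_gt1 (p := pT) alpha_gt0 (fun y x => p_ge0 x y)
  alpha_gt1 c1_gt0 (powR_gt0 _ Qk_gt0) a'k0 bndX'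
  (updX_norm_gt0 alpha_gt0 S1) (updX_norm_gt0 alpha_gt0 S1').
have eQ : Q `^ ((s ^+ 2) ^+ k) `^ s `^ s = Q `^ ((s ^+ 2) ^+ k.+1).
  by rewrite -!powRrM -expr2 -exprSr.
exists c2 => // x y pxy; have [_ b'y] := supported_traj k.+1 supp' pxy.
by have /andP[lo up] := bndY y; rewrite -eQ; split.
Qed.

Lemma rsum_succ_le_gt1 a b a' b' k c Q : 1 < alpha ->
  admissible a b -> admissible a' b' -> supported a' b' -> 0 < c -> 0 < Q ->
  ratio_within p c Q (traj a b k).2 (traj a' b' k).2 ->
  rsum a b k.+1 <= Q `^ ((alpha - 1) ^+ 2 / alpha) * rsum a' b' k.+1.
Proof.
move=> alpha_gt1 adm adm' supp' c_gt0 Q_gt0 bnd.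
set s := (alpha - 1) / alpha; set r := (1 - alpha) / alpha.
have [_ _ S0] := admissible_traj k adm; have [_ [b'k0 _] S0'] := admissible_traj k adm'.
have [da1 _ _] := admissible_traj k.+1 adm; have [da1' _ _] := admissible_traj k.+1 adm'.
have [c1 c1_gt0 bndX] := updX_ratio_gt1 alpha_gt0 p_ge0 alpha_gt1 c_gt0 Q_gt0 b'k0 bnd
  (updX_norm_gt0 alpha_gt0 S0) (updX_norm_gt0 alpha_gt0 S0').
have c1Q_ge1 : 1 <= c1 * Q `^ s.
  by apply: (dist_ratio_ge1 da1' da1) => x; case/andP: (bndX x).
have ZT_le : updX_norm alpha pT (traj a b k.+1).1 <=
             c1 `^ r * updX_norm alpha pT (traj a' b' k.+1).1.
  apply: (updX_norm_le_gt1 (p := pT) alpha_gt0 (fun y x => p_ge0 x y) alpha_gt1 c1_gt0).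
    by case: da1'.
  move=> y x pxy; have [a'x _] := supported_traj k.+1 supp' pxy.
  by case/andP: (bndX x).
have S_le : rsum a b k.+1 <= c1 `^ (1 - alpha) * rsum a' b' k.+1.
  apply: le_trans (_ : _ <= (c1 `^ r * updX_norm alpha pT (traj a' b' k.+1).1) `^ alpha) _.
    rewrite (rsum_succ_E k adm); apply: ge0_ler_powR ZT_le; rewrite ?nnegrE ?updX_norm_ge0 //.
      exact: ltW.
    by rewrite mulr_ge0 ?powR_ge0 ?updX_norm_ge0.
  rewrite powRM ?powR_ge0 ?updX_norm_ge0 // -powRrM /r mulfVK ?gt_eqF //.
  by rewrite -(rsum_succ_E k adm').
have c1_pow : c1 `^ (1 - alpha) <= Q `^ ((alpha - 1) ^+ 2 / alpha).
  have -> : Q `^ ((alpha - 1) ^+ 2 / alpha) = ((Q `^ s)^-1) `^ (1 - alpha).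
    rewrite -[(Q `^ s)^-1]powR_inv1 ?powR_ge0 // -!powRrM; congr (_ `^ _).
    by rewrite /s; field; rewrite gt_eqF.
  apply: lt0_ger_powR; first by rewrite subr_lt0.
    by rewrite invr_gt0 powR_gt0.
  by rewrite -div1r ler_pdivrMr ?powR_gt0.
by apply: le_trans S_le _; apply: ler_wpM2r c1_pow; apply: renyi_sum_ge0.
Qed.

Lemma traj_approx_gt1 a b a' b' rho : 1 < alpha ->
  admissible a b -> supported a b -> admissible a' b' -> supported a' b' -> 1 < rho ->
  exists k, rsum a b k <= rho * renyi_sum alpha p a' b'.
Proof.
move=> alpha_gt1 adm supp adm' supp' rho_gt1.
have [Q Q_gt0 ratio] := traj_ratio_gt1 alpha_gt1 adm supp adm' supp'.
have s2_01 : 0 <= ((alpha - 1) / alpha) ^+ 2 < 1.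
  have s0 : 0 <= (alpha - 1) / alpha by rewrite divr_ge0 ?subr_ge0 ?ltW.
  have s1 : (alpha - 1) / alpha < 1 by rewrite ltr_pdivrMr // mul1r ltrBlDr ltrDl.
  by rewrite sqr_ge0 /= expr2; nra.
have [k le_k] := exists_powR_expr_le ((alpha - 1) ^+ 2 / alpha) Q_gt0 s2_01 rho_gt1.
have [c c_gt0 bnd] := ratio k.
exists k.+1.
apply: le_trans (rsum_succ_le_gt1 alpha_gt1 adm adm' supp' c_gt0 (powR_gt0 _ Q_gt0) bnd) _.
rewrite -powRrM; apply: ler_pM => //; rewrite ?powR_ge0 ?renyi_sum_ge0 //.
exact: traj_le_renyi_sum_gt1.
Qed.

Lemma renyiDXY_traj_approx a b a' b' e : 1 / 2 <= alpha -> alpha != 1 ->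
  admissible a b -> (forall x, 0 < a x) -> (forall y, 0 < b y) ->
  is_dist a' -> is_dist b' -> 0 < e ->
  exists k, (renyiDXY alpha p (traj a b k).1 (traj a b k).2 <=
             renyiDXY alpha p a' b' + e%:E)%E.
Proof.
move=> alpha_ge_half alpha_neq1 adm a_gt0 b_gt0 da' db' e_gt0.
have supp : supported a b by move=> x y _; split.
have [D'_oo|D'_fin] := eqVneq (renyiDXY alpha p a' b') +oo%E.
  by exists 0%N; rewrite D'_oo addye ?leey.
have [adm' supp'] := renyiDXY_finite da' db' D'_fin.
have [_ _ S'_gt0] := adm'.
have S_gt0 k : 0 < rsum a b k by case: (admissible_traj k adm).
have [alpha_lt1|alpha_gt1|alpha_eq1] := ltgtP alpha 1.
- have rho_gt1 : 1 < expR ((1 - alpha) * e) by rewrite expR_gt1 mulr_gt0 ?subr_gt0.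
  have [k le_k] := traj_approx_lt1 alpha_ge_half alpha_lt1 adm b_gt0 adm' rho_gt1.
  exists k; rewrite (renyiDXY_traj k adm (fun=> supp)) (renyiDXY_E adm' supp') lee_fin.
  exact: renyi_log_le_lt1.
- have rho_gt1 : 1 < expR ((alpha - 1) * e) by rewrite expR_gt1 mulr_gt0 ?subr_gt0.
  have [k le_k] := traj_approx_gt1 alpha_gt1 adm supp adm' (supp' alpha_gt1) rho_gt1.
  exists k; rewrite (renyiDXY_traj k adm (fun=> supp)) (renyiDXY_E adm' supp') lee_fin.
  exact: renyi_log_le_gt1.
- by rewrite alpha_eq1 eqxx in alpha_neq1.
Qed.

End Trajectory.

Theorem proposition7 (R : realType) (X Y : finType) (alpha : R)
  (p : X -> Y -> R) (qX0 : X -> R) (qY0 : Y -> R) :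
  1 / 2 <= alpha -> alpha != 1 ->
  (forall x y, 0 <= p x y) -> \sum_(x : X) \sum_(y : Y) p x y = 1 ->
  is_dist qX0 -> is_dist qY0 ->
  (forall x, 0 < qX0 x) -> (forall y, 0 < qY0 y) ->
  (fun k => renyiDXY alpha p (ao_iter alpha p qX0 qY0 k).1
                             (ao_iter alpha p qX0 qY0 k).2)
    @ \oo --> I_LP alpha p.
Proof.
move=> alpha_ge_half alpha_neq1 p_ge0 p_sum1 dX dY qX_gt0 qY_gt0.
have alpha_gt0 : 0 < alpha by apply: lt_le_trans alpha_ge_half.
have p_pos : 0 < \sum_x \sum_y p x y by rewrite p_sum1.
have [x0 /sumr_gt0_exists [y0 pxy0]] := sumr_gt0_exists p_pos.
have adm : admissible alpha p qX0 qY0.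
  by split=> //; exact: (renyi_sum_gt0 alpha_gt0 pxy0 (qX_gt0 x0) (qY_gt0 y0)).
set D := fun k => renyiDXY alpha p (ao_iter alpha p qX0 qY0 k).1
                                   (ao_iter alpha p qX0 qY0 k).2.
have /ereal_nonincreasing_cvgn : nonincreasing_seq D.
  by apply: renyiDXY_traj_nonincreasing => // _ x y _; split.
suff -> : I_LP alpha p = ereal_inf (range D) by [].
apply/eqP; rewrite eq_le; apply/andP; split.
  apply: le_ereal_inf_tmp => _ [k _ <-]; apply: ereal_inf_lbound.
  have [dXk dYk _] := admissible_traj alpha_gt0 k adm.
  by exists (ao_iter alpha p qX0 qY0 k).1, (ao_iter alpha p qX0 qY0 k).2.
apply: le_ereal_inf_tmp => _ [a' [b' [da' db' ->]]]; apply/lee_addgt0Pr => e e_gt0.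
have [k le_k] := renyiDXY_traj_approx alpha_gt0 p_ge0 alpha_ge_half alpha_neq1 adm
  qX_gt0 qY_gt0 da' db' e_gt0.
by apply: ge_ereal_inf; exists (D k) => //; exists k.
Qed.
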